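(* Let $f,g,f_n,g_n\in\mathcal D$ ($n\in\mathbb N$) with $f_n\to f$ and $g_n\to g$ uniformly on $[0,1]$. Then: (a) $\chi(f,g)\le\sup_{n\in\mathbb N}\chi(f_n,g_n)$; (b) if $g_n\lhd f_n$ for all $n\in\mathbb N$, then either $f=g$ or $g\lhd f$.
   Context: $\mathcal D$: the set of continuous strictly decreasing $f\colon[0,1]\to[0,1]$ with $f(0)=1$, $f(1)=0$. For $f\in\mathcal D$ and $a>0$, $f_{[a]}\colon[0,\frac1a]\to[0,1]$, $x\mapsto f(ax)$; for $b>0$, $f_{[a]}-bg$ is considered on $[0,\min\{1,\frac1a\}]$. Sign switches: for a continuous $\Delta\colon[c_0,d_0]\to\mathbb R$, a closed subinterval $[c,d]$ with $c_0<c\le d<d_0$ and $\Delta([c,d])=\{0\}$ is a sign switch if there is $\delta\in(0,\min\{c-c_0,d_0-d\}]$ with $\Delta(c-x)\Delta(d+x)<0$ for all $x\in(0,\delta]$; $\chi\Delta$ is the number of sign switches. Crossing number: $\chi(f,g):=\sup\{\chi(f_{[a]}-bg): a,b>0\}\in\mathbb N_0\cup\{\infty\}$. Domination: $g\lhd f$ means $\chi(f,g)=2$ and $g\le f$ pointwise. *)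

From Stdlib Require Import Reals Lra List ClassicalEpsilon.
Open Scope R_scope.

Inductive enat : Type := Fin (n : nat) | Inf.

Definition enat_le (x y : enat) : Prop :=
  match x, y with
  | _, Inf => True
  | Inf, Fin _ => False
  | Fin m, Fin n => (m <= n)%nat
  end.

(* Given P k meaning "the quantity is >= k" (P 0 true, P downward closed),
   the value of the quantity in N_0 ∪ {∞}: ∞ if P holds for every k,
   otherwise the (unique) k with P k and ~ P (k+1). *)
Definition enat_of_ge (P : nat -> Prop) : enat :=
  match excluded_middle_informative (forall k, P k) with
  | left _ => Inf
  | right _ => Fin (epsilon (inhabits 0%nat) (fun k => P k /\ ~ P (S k)))
  end.

Definition in_D (f : R -> R) : Prop :=
  (forall x, 0 <= x <= 1 -> forall eps, 0 < eps -> exists delta, 0 < delta /\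
     forall y, 0 <= y <= 1 -> Rabs (y - x) < delta -> Rabs (f y - f x) < eps) /\
  (forall x y, 0 <= x <= 1 -> 0 <= y <= 1 -> x < y -> f y < f x) /\
  (forall x, 0 <= x <= 1 -> 0 <= f x <= 1) /\
  f 0 = 1 /\ f 1 = 0.

Definition sign_switch (Delta : R -> R) (c0 d0 c d : R) : Prop :=
  c0 < c /\ c <= d /\ d < d0 /\
  (forall x, c <= x <= d -> Delta x = 0) /\
  exists delta, 0 < delta /\ delta <= Rmin (c - c0) (d0 - d) /\
    forall x, 0 < x <= delta -> Delta (c - x) * Delta (d + x) < 0.

Definition switches_ge (Delta : R -> R) (c0 d0 : R) (k : nat) : Prop :=
  exists l : list (R * R), length l = k /\ NoDup l /\
    Forall (fun p => sign_switch Delta c0 d0 (fst p) (snd p)) l.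

Definition chi (Delta : R -> R) (c0 d0 : R) : enat :=
  enat_of_ge (switches_ge Delta c0 d0).

Definition scaled_diff (f g : R -> R) (a b : R) : R -> R :=
  fun x => f (a * x) - b * g x.

Definition crossing_number (f g : R -> R) : enat :=
  enat_of_ge (fun k => exists a b, 0 < a /\ 0 < b /\
    enat_le (Fin k) (chi (scaled_diff f g a b) 0 (Rmin 1 (/ a)))).

Definition enat_sup_seq (u : nat -> enat) : enat :=
  enat_of_ge (fun k => exists n, enat_le (Fin k) (u n)).

Definition dominated (g f : R -> R) : Prop :=
  crossing_number f g = Fin 2 /\ forall x, 0 <= x <= 1 -> g x <= f x.

Definition unif_conv (fs : nat -> R -> R) (f : R -> R) : Prop :=
  forall eps, 0 < eps -> exists N, forall n, (N <= n)%nat ->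
    forall x, 0 <= x <= 1 -> Rabs (fs n x - f x) < eps.

(* (a) A crossing number at least [k] is witnessed by [k] sign switches of
   [f_[a] - b g]. Widening them slightly gives [k] disjoint intervals across
   which the difference changes sign, and by uniform convergence so does
   [(fs n)_[a] - b' (gs n)] for large [n] and [b'] close to [b]. A sign change
   yields a sign switch as soon as the zeros are finite, and [b'] can be chosen
   so: the zeros are the [b']-level set of the ratio [(fs n)_[a] / gs n], which
   has bounded variation, and for such a function finite level sets occur for a
   dense set of values (a discrete Banach indicatrix argument).
   (b) Pointwise limits keep [g <= f], so (a) bounds the crossing number by [2].
   If [g x0 < f x0] inside [(0, 1)], then for [a] slightly above [1] and [b]
   between [1] and [f (a x0) / g x0], [f_[a] - b g] is negative at [0], positive
   at [x0] and negative at [1/a], which gives two sign switches. *)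

From Stdlib Require Import Reals Lra Lia List Arith Classical ClassicalEpsilon.
Open Scope R_scope.

Definition down_closed (P : nat -> Prop) : Prop := forall k, P (S k) -> P k.

Lemma down_closed_le (P : nat -> Prop) j k :
  down_closed P -> (j <= k)%nat -> P k -> P j.
Proof. intros HP Hjk; induction Hjk; auto. Qed.

Lemma enat_of_ge_cases (P : nat -> Prop) : down_closed P -> P 0%nat ->
  ((forall k, P k) /\ enat_of_ge P = Inf) \/
  (exists k, enat_of_ge P = Fin k /\ P k /\ ~ P (S k)).
Proof.
  intros HP H0; unfold enat_of_ge.
  destruct (excluded_middle_informative (forall k, P k)) as [Hall | Hnot]; [left; auto |].
  right; eexists; split; [reflexivity |]; apply epsilon_spec.
  apply not_all_ex_not in Hnot as [k Hk].
  induction k as [| k IH]; [contradiction |].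
  destruct (classic (P k)); eauto.
Qed.

Lemma Fin_le_enat_of_ge (P : nat -> Prop) k : down_closed P -> P 0%nat ->
  enat_le (Fin k) (enat_of_ge P) <-> P k.
Proof.
  intros HP H0.
  destruct (enat_of_ge_cases P HP H0) as [[Hall ->] | [j [-> [Pj Nj]]]]; simpl; [split; auto |].
  split; [intros Hkj; exact (down_closed_le P k j HP Hkj Pj) |].
  intros Pk; destruct (le_lt_dec k j) as [Hkj | Hjk]; auto.
  exfalso; exact (Nj (down_closed_le P (S j) k HP Hjk Pk)).
Qed.

Lemma enat_le_of_Fin_le (x y : enat) :
  (forall k, enat_le (Fin k) x -> enat_le (Fin k) y) -> enat_le x y.
Proof.
  intros H; destruct x as [n |]; destruct y as [m |]; simpl in *; auto.
  specialize (H (S m) I); lia.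
Qed.

Lemma enat_le_antisym (x y : enat) : enat_le x y -> enat_le y x -> x = y.
Proof. destruct x, y; simpl; intros; try contradiction; auto; f_equal; lia. Qed.

Lemma Fin_le_enat_sup_seq (u : nat -> enat) k :
  enat_le (Fin k) (enat_sup_seq u) <-> exists n, enat_le (Fin k) (u n).
Proof.
  apply Fin_le_enat_of_ge.
  - intros j [n Hn]; exists n; destruct (u n); simpl in *; auto; lia.
  - exists 0%nat; destruct (u 0%nat); simpl; auto; lia.
Qed.

Lemma enat_sup_seq_const (u : nat -> enat) x : (forall n, u n = x) -> enat_sup_seq u = x.
Proof.
  intros Hu; apply enat_le_antisym; apply enat_le_of_Fin_le; intros k Hk.
  - apply Fin_le_enat_sup_seq in Hk as [n Hn]; rewrite Hu in Hn; exact Hn.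
  - apply Fin_le_enat_sup_seq; exists O; rewrite Hu; exact Hk.
Qed.

Definition cont_on (phi : R -> R) (u v : R) : Prop :=
  forall x, u <= x <= v -> forall eps, 0 < eps -> exists delta, 0 < delta /\
    forall y, u <= y <= v -> Rabs (y - x) < delta -> Rabs (phi y - phi x) < eps.

Definition clamp (u v x : R) : R := Rmax u (Rmin v x).

Lemma clamp_in u v x : u <= v -> u <= clamp u v x <= v.
Proof. intros; unfold clamp, Rmax, Rmin; repeat destruct Rle_dec; lra. Qed.

Lemma clamp_id u v x : u <= x <= v -> clamp u v x = x.
Proof. intros; unfold clamp, Rmax, Rmin; repeat destruct Rle_dec; lra. Qed.

Lemma clamp_lipschitz u v x y : u <= v -> Rabs (clamp u v y - clamp u v x) <= Rabs (y - x).
Proof.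
  intros; unfold clamp, Rmax, Rmin; repeat destruct Rle_dec;
  unfold Rabs; repeat destruct Rcase_abs; lra.
Qed.

Lemma cont_on_continuity phi u v :
  u <= v -> cont_on phi u v -> continuity (fun x => phi (clamp u v x)).
Proof.
  intros Huv Hc x eps Heps.
  destruct (Hc (clamp u v x) (clamp_in u v x Huv) eps Heps) as [d [Hd Hy]].
  exists d; split; auto; intros y [_ Hxy]; apply Hy; [apply clamp_in; auto |].
  eapply Rle_lt_trans; [apply clamp_lipschitz; auto | exact Hxy].
Qed.

Lemma continuity_cont_on phi u v :
  continuity (fun x => phi (clamp u v x)) -> cont_on phi u v.
Proof.
  intros Hc x Hx eps Heps.
  destruct (Hc x eps Heps) as [d [Hd Hy]]; exists d; split; auto.
  intros y Hy' Hxy; simpl in Hy; unfold Rdist in Hy.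
  destruct (Req_dec y x) as [-> | Hne]; [rewrite Rminus_diag, Rabs_R0; exact Heps |].
  rewrite <- (clamp_id u v x), <- (clamp_id u v y) by auto.
  apply Hy; split; [split; [exact I | auto] | exact Hxy].
Qed.

Lemma cont_on_sub phi u v u' v' : cont_on phi u v -> u <= u' -> v' <= v -> cont_on phi u' v'.
Proof.
  intros Hc Hu Hv x Hx eps Heps; destruct (Hc x ltac:(lra) eps Heps) as [d [Hd Hy]].
  exists d; split; auto; intros y Hy' Hxy; apply Hy; auto; lra.
Qed.

Lemma cont_on_const c u v : cont_on (fun _ => c) u v.
Proof.
  intros x _ eps Heps; exists 1; split; [lra |]; intros.
  rewrite Rminus_diag, Rabs_R0; exact Heps.
Qed.

Lemma cont_on_minus phi psi u v : u <= v -> cont_on phi u v -> cont_on psi u v ->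
  cont_on (fun x => phi x - psi x) u v.
Proof.
  intros Huv H1 H2; apply continuity_cont_on.
  exact (continuity_minus _ _ (cont_on_continuity phi u v Huv H1) (cont_on_continuity psi u v Huv H2)).
Qed.

Lemma cont_on_scal c phi u v : u <= v -> cont_on phi u v -> cont_on (fun x => c * phi x) u v.
Proof.
  intros Huv H; apply continuity_cont_on.
  exact (continuity_scal _ c (cont_on_continuity phi u v Huv H)).
Qed.

Lemma cont_on_div phi psi u v : u <= v -> cont_on phi u v -> cont_on psi u v ->
  (forall x, u <= x <= v -> psi x <> 0) -> cont_on (fun x => phi x / psi x) u v.
Proof.
  intros Huv H1 H2 Hnz; apply continuity_cont_on.
  apply (continuity_div _ _ (cont_on_continuity phi u v Huv H1) (cont_on_continuity psi u v Huv H2)).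
  intros x; apply Hnz, clamp_in, Huv.
Qed.

Lemma cont_on_rescale phi a v : 0 < a -> 0 <= v -> a * v <= 1 -> cont_on phi 0 1 ->
  cont_on (fun x => phi (a * x)) 0 v.
Proof.
  intros Ha Hv Hav Hc; apply continuity_cont_on.
  assert (Hlin : continuity (fun x => a * clamp 0 v x)).
  { apply (continuity_scal (fun x => clamp 0 v x)).
    apply (cont_on_continuity (fun x => x) 0 v Hv).
    intros x _ eps Heps; exists eps; split; auto. }
  pose proof (continuity_comp _ _ Hlin (cont_on_continuity phi 0 1 ltac:(lra) Hc)) as Hcomp.
  intros x; refine (continuity_pt_locally_ext _ _ 1 x ltac:(lra) _ (Hcomp x)).
  intros y _; unfold comp; rewrite clamp_id; auto.
  pose proof (clamp_in 0 v y Hv); nra.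
Qed.

Lemma IVT_on phi u v x1 x2 : cont_on phi u v -> u <= x1 -> x1 <= x2 -> x2 <= v ->
  phi x1 * phi x2 <= 0 -> exists z, x1 <= z <= x2 /\ phi z = 0.
Proof.
  intros Hc H1 H12 H2 Hs.
  pose proof (cont_on_continuity phi u v ltac:(lra) Hc) as Hcc.
  destruct (IVT_cor _ x1 x2 Hcc H12) as [z [Hz Ez]]; [rewrite !clamp_id; auto; lra |].
  exists z; split; auto; rewrite clamp_id in Ez; auto; lra.
Qed.

Lemma no_zero_same_sign phi u v x1 x2 : cont_on phi u v -> u <= x1 -> x1 <= x2 -> x2 <= v ->
  (forall z, x1 <= z <= x2 -> phi z <> 0) -> 0 < phi x1 * phi x2.
Proof.
  intros Hc H1 H12 H2 Hnz; apply Rnot_le_lt; intros Hs.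
  destruct (IVT_on phi u v x1 x2 Hc H1 H12 H2 Hs) as [z [Hz Ez]]; exact (Hnz z Hz Ez).
Qed.

Lemma uniform_radius {A} (l : list A) (Pr : A -> R -> Prop) :
  (forall a, In a l -> exists r, 0 < r /\ forall r', 0 < r' <= r -> Pr a r') ->
  exists r, 0 < r /\ forall a, In a l -> forall r', 0 < r' <= r -> Pr a r'.
Proof.
  induction l as [| a l IH]; intros H; [exists 1; split; [lra | intros a []] |].
  destruct (H a (or_introl eq_refl)) as [r1 [Hr1 H1]].
  destruct IH as [r2 [Hr2 H2]]; [intros b Hb; apply H; right; auto |].
  exists (Rmin r1 r2); split; [apply Rmin_pos; auto |].
  pose proof (Rmin_l r1 r2); pose proof (Rmin_r r1 r2).
  intros b [<- | Hb] r' Hr'; [apply H1 | apply H2]; auto; lra.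
Qed.

Lemma isolation_radius (l : list R) z :
  exists d, 0 < d /\ forall w, In w l -> w <> z -> d <= Rabs (w - z).
Proof.
  destruct (uniform_radius l (fun w r => w <> z -> r <= Rabs (w - z))) as [d [Hd H]].
  - intros w _; destruct (Req_dec w z) as [-> | Hne].
    + exists 1; split; [lra | intros; contradiction].
    + exists (Rabs (w - z)); split; [apply Rabs_pos_lt; lra | intros r' Hr' _; lra].
  - exists d; split; auto; intros w Hw Hne; apply (H w Hw d); auto; lra.
Qed.

Lemma separation_radius (l : list R) :
  exists d, 0 < d /\ forall x x', In x l -> In x' l -> x <> x' -> d <= Rabs (x - x').
Proof.
  destruct (uniform_radius l (fun x r => forall w, In w l -> w <> x -> r <= Rabs (x - w)))
    as [d [Hd H]].
  - intros x _; destruct (isolation_radius l x) as [d [Hd Hi]]; exists d; split; auto.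
    intros r' Hr' w Hw Hne; rewrite Rabs_minus_sym; specialize (Hi w Hw Hne); lra.
  - exists d; split; auto; intros x x' Hx Hx' Hne; apply (H x Hx d); auto; lra.
Qed.

Lemma isolated_zero_side_signs phi p q (l : list R) z :
  cont_on phi p q -> p < z < q -> (forall x, p <= x <= q -> phi x = 0 -> In x l) ->
  exists d, 0 < d /\ d <= (z - p) / 2 /\ d <= (q - z) / 2 /\
    phi (z - d) <> 0 /\ phi (z + d) <> 0 /\
    forall x, 0 < x <= d -> 0 < phi (z - d) * phi (z - x) /\ 0 < phi (z + d) * phi (z + x).
Proof.
  intros Hc Hz Hl; destruct (isolation_radius l z) as [d0 [Hd0 Hiso]].
  set (d := Rmin (d0 / 2) (Rmin ((z - p) / 2) ((q - z) / 2))).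
  assert (Hd : 0 < d) by (repeat apply Rmin_pos; lra).
  assert (d <= d0 / 2) by apply Rmin_l.
  assert (d <= (z - p) / 2) by (eapply Rle_trans; [apply Rmin_r | apply Rmin_l]).
  assert (d <= (q - z) / 2) by (eapply Rle_trans; [apply Rmin_r | apply Rmin_r]).
  assert (Hnz : forall w, z - d <= w <= z + d -> w <> z -> phi w <> 0).
  { intros w Hw Hne E; specialize (Hiso w (Hl w ltac:(lra) E) Hne).
    unfold Rabs in Hiso; destruct Rcase_abs in Hiso; lra. }
  exists d; split; [| split; [| split; [| split; [| split]]]]; auto; try (apply Hnz; lra).
  intros x Hx; split.
  - apply (no_zero_same_sign phi p q); auto; try lra; intros w Hw; apply Hnz; lra.
  - rewrite Rmult_comm; apply (no_zero_same_sign phi p q); auto; try lra.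
    intros w Hw; apply Hnz; lra.
Qed.

Lemma opposite_sign_transfer a b a' b' : a * b < 0 -> 0 < a' * a -> 0 < b' * b -> a' * b' < 0.
Proof.
  intros H1 H2 H3.
  assert (Hprod : 0 < (a' * b') * (a * b))
    by (replace ((a' * b') * (a * b)) with ((a' * a) * (b' * b)) by ring; nra).
  nra.
Qed.

(* Split at any zero; if [phi] does not change sign across it, recurse on a half
   that still changes sign, which contains fewer zeros. *)
Lemma point_sign_switch phi p q (l : list R) :
  p < q -> cont_on phi p q -> phi p * phi q < 0 ->
  (forall x, p <= x <= q -> phi x = 0 -> In x l) ->
  exists z d, p < z < q /\ phi z = 0 /\ 0 < d /\ d <= z - p /\ d <= q - z /\
    forall x, 0 < x <= d -> phi (z - x) * phi (z + x) < 0.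
Proof.
  remember (length l) as N eqn:HN; assert (HlN : (length l <= N)%nat) by lia; clear HN.
  revert l p q HlN; induction N as [| N IH]; intros l p q HlN Hpq Hc Hs Hl;
    destruct (IVT_on phi p q p q Hc ltac:(lra) ltac:(lra) ltac:(lra) ltac:(lra)) as [z [Hz Ez]].
  { destruct l; [destruct (Hl z Hz Ez) | simpl in HlN; lia]. }
  assert (Hz' : p < z < q) by (split; apply Rnot_le_lt; intros ?;
    [replace p with z in Hs by lra | replace q with z in Hs by lra]; rewrite Ez in Hs; lra).
  assert (Hzl : In z l) by exact (Hl z Hz Ez).
  destruct (isolated_zero_side_signs phi p q l z Hc Hz' Hl)
    as [d [Hd [Hdp [Hdq [HL [HR Hside]]]]]].
  destruct (Rlt_dec (phi (z - d) * phi (z + d)) 0) as [Hcross | Hsame].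
  { exists z, d; repeat split; auto; try lra; intros x Hx.
    destruct (Hside x Hx); eapply opposite_sign_transfer; eauto; nra. }
  assert (Hsame' : 0 < phi (z - d) * phi (z + d)).
  { assert (phi (z - d) * phi (z + d) <> 0) by (apply Rmult_integral_contrapositive; auto); lra. }
  assert (Hl' : (length (remove Req_EM_T z l) <= N)%nat)
    by (pose proof (remove_length_lt Req_EM_T l z Hzl); lia).
  assert (Hrem : forall u v, p <= u -> v <= q -> ~ (u <= z <= v) ->
    forall w, u <= w <= v -> phi w = 0 -> In w (remove Req_EM_T z l)).
  { intros u v Hu Hv Hnot w Hw Ew; apply in_in_remove; [intros ->; lra | apply Hl; auto; lra]. }
  destruct (Rlt_dec (phi p * phi (z - d)) 0) as [Hleft | Hleft].
  - destruct (IH _ p (z - d) Hl' ltac:(lra) (cont_on_sub phi p q p (z - d) Hc ltac:(lra) ltac:(lra))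
      Hleft (Hrem p (z - d) ltac:(lra) ltac:(lra) ltac:(lra))) as [z' [d' H']].
    exists z', d'; repeat split; try lra; apply H'.
  - assert (Hright : phi (z + d) * phi q < 0).
    { assert (phi p * phi (z - d) <> 0)
        by (apply Rmult_integral_contrapositive; split; auto; intros E; rewrite E in Hs; lra).
      apply (opposite_sign_transfer (phi p) (phi q)); auto; nra. }
    destruct (IH _ (z + d) q Hl' ltac:(lra) (cont_on_sub phi p q (z + d) q Hc ltac:(lra) ltac:(lra))
      Hright (Hrem (z + d) q ltac:(lra) ltac:(lra) ltac:(lra))) as [z' [d' H']].
    exists z', d'; repeat split; try lra; apply H'.
Qed.

Fixpoint sum_upto (u : nat -> R) (N : nat) : R :=
  match N with O => 0 | S N' => sum_upto u N' + u N' end.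

Lemma sum_upto_le u v N : (forall i, (i < N)%nat -> u i <= v i) -> sum_upto u N <= sum_upto v N.
Proof.
  induction N as [| N IH]; simpl; intros H; [lra |].
  pose proof (H N (Nat.lt_succ_diag_r N)); pose proof (IH (fun i Hi => H i (Nat.lt_lt_succ_r _ _ Hi))).
  lra.
Qed.

Lemma sum_upto_plus u v N : sum_upto (fun i => u i + v i) N = sum_upto u N + sum_upto v N.
Proof. induction N; simpl; [| rewrite IHN]; lra. Qed.

Lemma sum_upto_scal c u N : sum_upto (fun i => c * u i) N = c * sum_upto u N.
Proof. induction N; simpl; [| rewrite IHN]; lra. Qed.

Lemma sum_upto_const c N : sum_upto (fun _ => c) N = INR N * c.
Proof. induction N; simpl sum_upto; [simpl | rewrite IHN, S_INR]; lra. Qed.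

Lemma sum_upto_telescope (u : nat -> R) N : sum_upto (fun i => u i - u (S i)) N = u O - u N.
Proof. induction N; simpl; [| rewrite IHN]; lra. Qed.

Lemma length_flat_map_seq {B} (W : nat -> list B) N :
  INR (length (flat_map W (seq 0 N))) = sum_upto (fun i => INR (length (W i))) N.
Proof.
  induction N as [| N IH]; [reflexivity |].
  rewrite seq_S, flat_map_app, length_app, plus_INR, IH; simpl; rewrite app_nil_r; reflexivity.
Qed.

Lemma In_flat_map_seq {B} (W : nat -> list B) N y :
  In y (flat_map W (seq 0 N)) <-> exists i, (i < N)%nat /\ In y (W i).
Proof.
  rewrite in_flat_map; split; intros [i [Hi Hy]]; exists i; split; auto;
    [apply in_seq in Hi | apply in_seq]; lia.
Qed.

Lemma double_count {A B} (X : list A) (wit : A -> list B) (J : list B) (W : B -> list A) m :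
  NoDup X -> (forall a, In a X -> NoDup (wit a) /\ length (wit a) = m) ->
  (forall a b, In a X -> In b (wit a) -> In b J /\ In a (W b)) ->
  (m * length X <= length (flat_map W J))%nat.
Proof.
  intros HX Hwit HW.
  set (pairs := flat_map (fun a => map (fun b => (a, b)) (wit a)) X).
  assert (Hlen : length pairs = (m * length X)%nat).
  { unfold pairs; rewrite (flat_map_constant_length (c := m)); [lia |].
    intros a Ha; rewrite length_map; apply Hwit, Ha. }
  assert (Hbucket : length (flat_map (fun b => map (fun a => (a, b)) (W b)) J) = length (flat_map W J)).
  { rewrite !length_flat_map; f_equal; apply map_ext; intros; apply length_map. }
  rewrite <- Hlen, <- Hbucket; apply NoDup_incl_length.
  - unfold pairs; clear Hlen Hbucket; induction X as [| a X IH]; simpl; [constructor |].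
    apply NoDup_cons_iff in HX as [Ha HX]; apply NoDup_app.
    + apply NoDup_map_NoDup_ForallPairs; [intros b b' _ _ E; congruence | apply Hwit; left; auto].
    + apply IH; auto; intros; [apply Hwit | apply HW]; auto; right; auto.
    + intros [a' b] Hab Hab'; apply in_map_iff in Hab as [b1 [E1 _]].
      apply in_flat_map in Hab' as [a2 [Ha2 Hab']]; apply in_map_iff in Hab' as [b2 [E2 _]].
      congruence.
  - intros [a b] Hab; apply in_flat_map in Hab as [a' [Ha' Hab]].
    apply in_map_iff in Hab as [b' [E Hb']]; injection E as -> ->.
    destruct (HW a b Ha' Hb') as [HbJ HaW].
    apply in_flat_map; exists b; split; auto; apply in_map_iff; exists a; auto.
Qed.

Lemma Rdiv_le_0_compat x y : 0 <= x -> 0 < y -> 0 <= x / y.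
Proof. intros; apply Rmult_le_pos; [| left; apply Rinv_0_lt_compat]; auto. Qed.

Lemma grid_index_diff l l' c s r : 0 < s -> (c + INR l * s) - (c + INR l' * s) <= r ->
  INR l - INR l' <= r / s.
Proof.
  intros Hs H; replace (INR l - INR l') with (((c + INR l * s) - (c + INR l' * s)) / s) by (field; lra).
  apply Rmult_le_compat_r; [left; apply Rinv_0_lt_compat |]; auto.
Qed.

Lemma nat_ceil r : 0 <= r -> exists t : nat, r <= INR t <= r + 1.
Proof.
  intros Hr; destruct (INR_unbounded r) as [n Hn]; revert Hn; induction n; intros Hn.
  - simpl in Hn; lra.
  - destruct (Rlt_dec r (INR n)); auto; exists (S n); rewrite S_INR in *; lra.
Qed.

Lemma index_window (Sel : nat -> Prop) r : 0 <= r ->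
  (forall l l', Sel l -> Sel l' -> INR l - INR l' <= r) ->
  exists W : list nat, INR (length W) <= 2 * r + 3 /\ forall l, Sel l -> In l W.
Proof.
  intros Hr H; destruct (classic (exists l0, Sel l0)) as [[l0 H0] | Hnone].
  - destruct (nat_ceil r Hr) as [t Ht]; exists (seq (l0 - t) (2 * t + 1)); split.
    + rewrite length_seq, plus_INR, mult_INR; simpl; lra.
    + intros l Hl; apply in_seq; pose proof (H l l0 Hl H0); pose proof (H l0 l H0 Hl).
      assert (Hup : INR l <= INR (l0 + t)) by (rewrite plus_INR; lra).
      assert (Hlow : INR l0 <= INR (l + t)) by (rewrite plus_INR; lra).
      apply INR_le in Hup; apply INR_le in Hlow; lia.
  - exists nil; split; [simpl; lra | intros l Hl; exfalso; eauto].
Qed.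

Lemma split_by (Pr : nat -> Prop) L : exists Good Bad : list nat,
  NoDup Good /\ NoDup Bad /\ (forall l, In l Good -> Pr l) /\ (forall l, In l Bad -> (l < L)%nat /\ ~ Pr l) /\
  INR L <= INR (length Good) + INR (length Bad).
Proof.
  set (b := fun l => if excluded_middle_informative (Pr l) then true else false).
  exists (filter b (seq 0 L)), (filter (fun l => negb (b l)) (seq 0 L)).
  split; [| split; [| split; [| split]]]; try (apply NoDup_filter, seq_NoDup).
  - intros l Hl; apply filter_In in Hl as [_ Hb]; unfold b in Hb.
    destruct excluded_middle_informative; auto; discriminate.
  - intros l Hl; apply filter_In in Hl as [Hl Hb]; apply in_seq in Hl; split; [lia |].
    unfold b in Hb; destruct excluded_middle_informative; auto; discriminate.
  - rewrite <- plus_INR, <- length_app; apply le_INR.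
    rewrite <- (length_seq L 0) at 1; apply NoDup_incl_length; [apply seq_NoDup |].
    intros l Hl; apply in_or_app; destruct (b l) eqn:E; [left | right]; apply filter_In; rewrite E; auto.
Qed.

Definition dyadic (n : nat) : nat := (2 ^ n)%nat.

Lemma dyadic_pos n : (1 <= dyadic n)%nat.
Proof. unfold dyadic; induction n; simpl; lia. Qed.

Lemma dyadic_INR_pos n : 0 < INR (dyadic n).
Proof. apply lt_0_INR; pose proof (dyadic_pos n); lia. Qed.

Lemma dyadic_S n : dyadic (S n) = (2 * dyadic n)%nat.
Proof. unfold dyadic; simpl; lia. Qed.

Lemma dyadic_split k n : (k <= n)%nat -> dyadic n = (dyadic k * dyadic (n - k))%nat.
Proof. intros; unfold dyadic; rewrite <- Nat.pow_add_r; f_equal; lia. Qed.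

Lemma INR_lt_dyadic n : INR n < INR (dyadic n).
Proof.
  induction n; [simpl; lra |].
  rewrite dyadic_S, mult_INR, S_INR; pose proof (le_INR _ _ (dyadic_pos n)); simpl in *; lra.
Qed.

Lemma sum_upto_inv_dyadic N : sum_upto (fun k => / INR (dyadic k)) N <= 2.
Proof.
  enough (sum_upto (fun k => / INR (dyadic k)) N = 2 - 2 / INR (dyadic N))
    by (pose proof (Rdiv_lt_0_compat 2 _ ltac:(lra) (dyadic_INR_pos N)); lra).
  induction N; [unfold dyadic; simpl; lra |].
  simpl sum_upto; rewrite IHN, dyadic_S, mult_INR; pose proof (dyadic_INR_pos N); simpl; field; lra.
Qed.

Lemma sum_upto_dyadic N : sum_upto (fun k => INR (dyadic k)) (S N) <= 2 * INR (dyadic N).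
Proof.
  enough (sum_upto (fun k => INR (dyadic k)) N = INR (dyadic N) - 1) by (simpl; lra).
  induction N; [unfold dyadic; simpl; lra |].
  simpl sum_upto; rewrite IHN, dyadic_S, mult_INR; simpl; lra.
Qed.

Lemma uniform_partition_cell r A w x : 0 < w -> A <= x <= A + INR (S r) * w ->
  exists j, (j <= r)%nat /\ A + INR j * w <= x <= A + INR (S j) * w.
Proof.
  revert x; induction r as [| r IH]; intros x Hw Hx; [exists 0%nat; simpl in *; split; [lia | lra] |].
  destruct (Rle_dec x (A + INR (S r) * w)).
  - destruct (IH x Hw) as [j [Hj Hj']]; [lra | exists j; split; auto].
  - exists (S r); split; [lia | lra].
Qed.

Section DyadicCells.

Variables P Q : R.
Hypothesis PltQ : P < Q.

Definition grid_step (n : nat) : R := (Q - P) / INR (dyadic n).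
Definition node (n i : nat) : R := P + INR i * grid_step n.
Definition in_cell (n i : nat) (x : R) : Prop := node n i <= x <= node n (S i).

Lemma grid_step_pos n : 0 < grid_step n.
Proof. apply Rdiv_lt_0_compat; [lra | apply dyadic_INR_pos]. Qed.

Lemma node_last n : node n (dyadic n) = Q.
Proof. unfold node, grid_step; field; apply Rgt_not_eq, dyadic_INR_pos. Qed.

Lemma node_range n i : (i <= dyadic n)%nat -> P <= node n i <= Q.
Proof.
  intros Hi; rewrite <- (node_last n); apply le_INR in Hi.
  pose proof (pos_INR i); pose proof (grid_step_pos n); unfold node; split; nra.
Qed.

Lemma in_cell_range n i x : (i < dyadic n)%nat -> in_cell n i x -> P <= x <= Q.
Proof.
  intros Hi [H1 H2]; pose proof (node_range n i ltac:(lia)); pose proof (node_range n (S i) Hi); lra.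
Qed.

Lemma node_in_cell n i : in_cell n i (node n i).
Proof. unfold in_cell, node; rewrite S_INR; pose proof (grid_step_pos n); lra. Qed.

Lemma cell_of_point n x : P <= x <= Q -> exists i, (i < dyadic n)%nat /\ in_cell n i x.
Proof.
  intros Hx; pose proof (dyadic_pos n).
  destruct (uniform_partition_cell (dyadic n - 1) P (grid_step n) x (grid_step_pos n)) as [j [Hj Hj']].
  - replace (S (dyadic n - 1)) with (dyadic n) by lia; fold (node n (dyadic n)).
    rewrite node_last; exact Hx.
  - exists j; split; [lia | exact Hj'].
Qed.

Lemma cell_refine k n i x : (k <= n)%nat -> in_cell k i x ->
  exists j, (i * dyadic (n - k) <= j < S i * dyadic (n - k))%nat /\ in_cell n j x.
Proof.
  intros Hkn [H1 H2]; set (r := dyadic (n - k)); pose proof (dyadic_pos (n - k)).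
  assert (Hstep : grid_step k = INR r * grid_step n).
  { unfold grid_step, r; rewrite (dyadic_split k n Hkn), mult_INR; field.
    split; apply Rgt_not_eq, dyadic_INR_pos. }
  destruct (uniform_partition_cell (r - 1) (node n (i * r)) (grid_step n) x (grid_step_pos n))
    as [j [Hj Hj']].
  - unfold node in *; rewrite Hstep in H1, H2; rewrite mult_INR.
    replace (S (r - 1)) with r by (unfold r; lia); rewrite S_INR in H2; nra.
  - exists (i * r + j)%nat; split; [unfold r in *; nia |].
    unfold in_cell, node in *; rewrite ?S_INR, ?plus_INR, ?mult_INR in *; lra.
Qed.

End DyadicCells.

Lemma heine_borel_nat (O : nat -> R -> Prop) a b : a <= b ->
  (forall k y, O k y -> exists r, 0 < r /\ forall y', Rabs (y' - y) < r -> O k y') ->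
  (forall y, a <= y <= b -> exists k, O k y) ->
  exists n, forall y, a <= y <= b -> exists k, (k <= n)%nat /\ O k y.
Proof.
  intros Hab Hopen Hcov.
  set (covered := fun x => a <= x <= b /\
    exists n, forall y, a <= y <= x -> exists k, (k <= n)%nat /\ O k y).
  assert (Ha : covered a).
  { split; [lra |]; destruct (Hcov a ltac:(lra)) as [k Hk]; exists k; intros y Hy.
    exists k; split; auto; replace y with a by lra; auto. }
  destruct (completeness covered) as [c [Hub Hlub]];
    [exists b; intros x [Hx _]; lra | exists a; auto |].
  assert (Hac : a <= c) by (apply Hub; auto).
  assert (Hcb : c <= b) by (apply Hlub; intros x [Hx _]; lra).
  destruct (Hcov c ltac:(lra)) as [k0 Hk0]; destruct (Hopen k0 c Hk0) as [r [Hr Hball]].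
  assert (Hnear : exists x, covered x /\ c - r < x).
  { apply NNPP; intros C; assert (c <= c - r); [| lra].
    apply Hlub; intros x Hx; apply Rnot_lt_le; intros Hlt; apply C; eauto. }
  destruct Hnear as [x [[Hx [n1 Hn1]] Hxc]].
  assert (Hext : forall z, z < c + r -> forall y, a <= y <= z ->
    exists k, (k <= Nat.max n1 k0)%nat /\ O k y).
  { intros z Hz y Hy; destruct (Rle_dec y x).
    - destruct (Hn1 y ltac:(lra)) as [k [Hk Ok]]; exists k; split; auto; lia.
    - exists k0; split; [lia |]; apply Hball; unfold Rabs; destruct Rcase_abs; lra. }
  destruct (Rlt_dec b (c + r)) as [Hbig | Hsmall]; [exists (Nat.max n1 k0); apply (Hext b); auto |].
  assert (Hbeyond : covered (c + r / 2)) by (split; [lra | exists (Nat.max n1 k0); apply Hext; lra]).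
  specialize (Hub _ Hbeyond); lra.
Qed.

Lemma grid_point_range l L D : (l < L)%nat -> 0 < D -> 0 <= INR l * (D / INR L) <= D.
Proof.
  intros HlL HD; assert (HL : 0 < INR L) by (apply lt_0_INR; lia); apply lt_INR in HlL.
  pose proof (pos_INR l); replace (INR l * (D / INR L)) with (INR l / INR L * D) by (field; lra).
  assert (0 <= INR l / INR L <= 1); [| nra].
  split; [apply Rdiv_le_0_compat; lra |].
  apply (Rmult_le_reg_r (INR L)); auto; unfold Rdiv; rewrite Rmult_assoc, Rinv_l by lra; lra.
Qed.

Lemma grid_count_contradiction (m K L v G B : R) : 0 <= v -> 4 * v + 2 < m -> 0 < K ->
  L = 12 * m * K + 3 * K + 1 -> B <= L / 2 + 12 * K -> m * G <= 2 * v * L + 3 * K ->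
  L <= G + B -> False.
Proof.
  intros Hv Hm HK HL HB HG Hsplit.
  assert (HL0 : 0 < L) by (subst L; assert (0 < m * K) by nra; lra).
  assert (m * (L / 2 - 12 * K) <= m * G) by (apply Rmult_le_compat_l; lra).
  assert (0 < (m / 2 - (2 * v + 1)) * L) by (apply Rmult_lt_0_compat; lra).
  lra.
Qed.

Lemma distinct_points (E : R -> Prop) :
  (forall l, exists x, E x /\ ~ In x l) ->
  forall m, exists pts, NoDup pts /\ length pts = m /\ forall x, In x pts -> E x.
Proof.
  intros H m; induction m as [| m [pts [Hnd [Hlen Hin]]]]; [exists nil; repeat constructor; intros x [] |].
  destruct (H pts) as [x [Ex Nx]]; exists (x :: pts); split; [constructor; auto |].
  split; [simpl; auto | intros z [<- | Hz]; auto].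
Qed.

(** * Level sets of functions of bounded variation *)

(* The Banach indicatrix argument. If every [y] in [(a, b)] had infinitely many
   preimages, compactness would give one dyadic level [n] at which [m] cells
   nearly hit each such [y]. On a fine grid of values, those hit by [m] cells of
   level [n] are paid for by the variation [V], those only nearly hit by the
   tolerances [e k]; the two bounds cannot cover the whole grid. *)
Section LevelSets.

Variables (h : R -> R) (P Q V : R).
Hypothesis PltQ : P < Q.
Hypothesis h_cont : cont_on h P Q.
Hypothesis h_var : forall n, exists B : nat -> R,
  (forall i x x', (i < dyadic n)%nat -> in_cell P Q n i x -> in_cell P Q n i x' ->
     Rabs (h x - h x') <= B i) /\
  sum_upto B (dyadic n) <= V.

Definition meets (n m : nat) (A : R -> Prop) : Prop :=
  exists I : list nat, NoDup I /\ length I = m /\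
    forall i, In i I -> (i < dyadic n)%nat /\ exists x, in_cell P Q n i x /\ A (h x).

Definition hits n m y : Prop := meets n m (fun v => v = y).

Definition near (e : R) n m y : Prop := meets n m (fun v => Rabs (v - y) < e).

Lemma meets_weaken n m (A B : R -> Prop) : (forall v, A v -> B v) -> meets n m A -> meets n m B.
Proof.
  intros HAB [I [Hnd [Hlen HI]]]; exists I; split; [| split]; auto; intros i Hi.
  destruct (HI i Hi) as [Hi' [x [Hx Ax]]]; split; eauto.
Qed.

Lemma meets_refine k n m A : (k <= n)%nat -> meets k m A -> meets n m A.
Proof.
  intros Hkn [I [Hnd [Hlen HI]]]; set (r := dyadic (n - k)).
  assert (Hsub : forall i, In i I -> exists j, ((i * r <= j < S i * r)%nat /\
    exists x, in_cell P Q n j x /\ A (h x))).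
  { intros i Hi; destruct (HI i Hi) as [_ [x [Hx Ax]]].
    destruct (cell_refine P Q PltQ k n i x Hkn Hx) as [j [Hj Hj']]; eauto. }
  destruct (choice (fun i j => In i I -> (i * r <= j < S i * r)%nat /\
    exists x, in_cell P Q n j x /\ A (h x))) as [sub Hsub'].
  { intros i; destruct (classic (In i I)) as [Hi | Hi]; [destruct (Hsub i Hi) as [j Hj] | exists O];
      eauto; intros; contradiction. }
  exists (map sub I); split; [| split; [rewrite length_map; auto |]].
  - apply NoDup_map_NoDup_ForallPairs; auto; intros i i' Hi Hi' E.
    destruct (Hsub' i Hi) as [Ri _]; destruct (Hsub' i' Hi') as [Ri' _]; rewrite E in Ri.
    destruct (Nat.lt_trichotomy i i') as [L | [L | L]]; auto; exfalso; nia.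
  - intros j Hj; apply in_map_iff in Hj as [i [<- Hi]].
    destruct (Hsub' i Hi) as [Ri Hx]; split; auto; destruct (HI i Hi) as [Hik _].
    rewrite (dyadic_split k n Hkn); fold r; nia.
Qed.

Lemma hits_of_infinite_level y :
  (forall l, exists x, P <= x <= Q /\ h x = y /\ ~ In x l) -> forall m, exists n, hits n m y.
Proof.
  intros Hinf m.
  destruct (distinct_points (fun x => P <= x <= Q /\ h x = y)) with (m := m) as [pts [Hnd [Hlen Hpts]]].
  { intros l; destruct (Hinf l) as [x [Hx [Ex Nx]]]; eauto. }
  destruct (separation_radius pts) as [d [Hd Hsep]].
  destruct (INR_unbounded ((Q - P) / d)) as [n Hn]; exists n.
  assert (Hfine : grid_step P Q n < d).
  { pose proof (INR_lt_dyadic n); pose proof (dyadic_INR_pos n); unfold grid_step.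
    apply Rmult_lt_reg_r with (INR (dyadic n)); [lra |].
    unfold Rdiv in *; rewrite Rmult_assoc, Rinv_l, Rmult_1_r by lra.
    apply Rmult_lt_reg_r with (/ d); [apply Rinv_0_lt_compat; auto |].
    replace (d * INR (dyadic n) * / d) with (INR (dyadic n)) by (field; lra); lra. }
  destruct (choice (fun x i => P <= x <= Q -> (i < dyadic n)%nat /\ in_cell P Q n i x)) as [cell Hcell].
  { intros x; destruct (classic (P <= x <= Q)) as [Hx | Hx];
      [destruct (cell_of_point P Q PltQ n x Hx) as [i Hi] | exists O]; eauto; intros; contradiction. }
  exists (map cell pts); split; [| split; [rewrite length_map; auto |]].
  - apply NoDup_map_NoDup_ForallPairs; auto; intros x x' Hx Hx' E.
    destruct (Req_dec x x') as [| Hne]; auto; exfalso.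
    destruct (Hcell x (proj1 (Hpts x Hx))) as [_ [H1 H2]].
    destruct (Hcell x' (proj1 (Hpts x' Hx'))) as [_ [H3 H4]]; rewrite E in H1, H2.
    specialize (Hsep x x' Hx Hx' Hne); unfold node in *; rewrite S_INR in *.
    assert (Rabs (x - x') <= grid_step P Q n) by (unfold Rabs; destruct Rcase_abs; lra); lra.
  - intros i Hi; apply in_map_iff in Hi as [x [<- Hx]].
    destruct (Hpts x Hx) as [Hx' Ex]; destruct (Hcell x Hx'); split; eauto.
Qed.

Lemma near_open e n m y : near e n m y ->
  exists r, 0 < r /\ forall y', Rabs (y' - y) < r -> near e n m y'.
Proof.
  intros [I [Hnd [Hlen HI]]].
  destruct (uniform_radius I (fun i r => forall y', Rabs (y' - y) < r ->
    exists x, in_cell P Q n i x /\ Rabs (h x - y') < e)) as [r [Hr Hrad]].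
  - intros i Hi; destruct (HI i Hi) as [_ [x [Hx Ex]]]; exists (e - Rabs (h x - y)).
    split; [lra |]; intros r' Hr' y' Hy'; exists x; split; auto.
    replace (h x - y') with ((h x - y) + (y - y')) by ring.
    eapply Rle_lt_trans; [apply Rabs_triang |]; rewrite Rabs_minus_sym in Hy'; lra.
  - exists r; split; auto; intros y' Hy'; exists I; split; [| split]; auto; intros i Hi.
    split; [apply (HI i Hi) | apply (Hrad i Hi r); auto; lra].
Qed.

Lemma missed_cell n m (A B : R -> Prop) : meets n m A -> ~ meets n m B ->
  exists i, (i < dyadic n)%nat /\ (exists x, in_cell P Q n i x /\ A (h x)) /\
    ~ (exists x, in_cell P Q n i x /\ B (h x)).
Proof.
  intros [I [Hnd [Hlen HI]]] HnB; apply NNPP; intros C; apply HnB.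
  exists I; split; [| split]; auto; intros i Hi; destruct (HI i Hi) as [Hik HA]; split; auto.
  apply NNPP; intros Hno; apply C; eauto.
Qed.

Lemma cell_side n i y : (i < dyadic n)%nat -> ~ (exists x, in_cell P Q n i x /\ h x = y) ->
  (forall x, in_cell P Q n i x -> h x < y) \/ (forall x, in_cell P Q n i x -> y < h x).
Proof.
  intros Hi Hmiss.
  assert (Hc : cont_on (fun x => h x - y) P Q)
    by (apply cont_on_minus; [lra | exact h_cont | apply cont_on_const]).
  assert (Hno_change : forall x1 x2, in_cell P Q n i x1 -> in_cell P Q n i x2 -> x1 <= x2 ->
    (h x1 - y) * (h x2 - y) <= 0 -> False).
  { intros x1 x2 Hx1 Hx2 H12 Hs.
    pose proof (in_cell_range P Q PltQ n i x1 Hi Hx1); pose proof (in_cell_range P Q PltQ n i x2 Hi Hx2).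
    destruct (IVT_on _ P Q x1 x2 Hc) as [z [Hz Ez]]; try lra.
    apply Hmiss; exists z; split; [unfold in_cell in *; lra | lra]. }
  destruct (classic (exists x, in_cell P Q n i x /\ y < h x)) as [[x1 [Hx1 Hgt]] | Hnone].
  - right; intros x2 Hx2; apply Rnot_le_lt; intros Hle.
    destruct (Rle_dec x1 x2); [apply (Hno_change x1 x2) | apply (Hno_change x2 x1)]; auto; nra.
  - left; intros x Hx; apply Rnot_le_lt; intros Hge.
    destruct (Req_dec (h x) y) as [E | Hne]; [apply Hmiss; eauto | apply Hnone; exists x; split; auto; lra].
Qed.

Lemma good_grid_count m n c s (X : list nat) : 0 < s -> NoDup X ->
  (forall l, In l X -> hits n m (c + INR l * s)) ->
  INR m * INR (length X) <= 2 * V / s + 3 * INR (dyadic n).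
Proof.
  intros Hs HX Hhit; destruct (h_var n) as [B [HB HV]].
  assert (HB0 : forall i, (i < dyadic n)%nat -> 0 <= B i).
  { intros i Hi; pose proof (HB i _ _ Hi (node_in_cell P Q PltQ n i) (node_in_cell P Q PltQ n i)) as Hself.
    rewrite Rminus_diag, Rabs_R0 in Hself; exact Hself. }
  destruct (choice (fun i W => (i < dyadic n)%nat -> INR (length W) <= 2 * (B i / s) + 3 /\
    forall l, (exists x, in_cell P Q n i x /\ h x = c + INR l * s) -> In l W)) as [W HW].
  { intros i; destruct (le_lt_dec (dyadic n) i) as [Hi | Hi]; [exists nil; lia |].
    destruct (index_window (fun l => exists x, in_cell P Q n i x /\ h x = c + INR l * s) (B i / s))
      as [W HW]; [apply Rdiv_le_0_compat; auto | | exists W; auto].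
    intros l l' [x [Hx Ex]] [x' [Hx' Ex']]; apply (grid_index_diff l l' c s); auto.
    pose proof (HB i x x' Hi Hx Hx') as Hosc; rewrite <- Ex, <- Ex'.
    unfold Rabs in Hosc; destruct Rcase_abs in Hosc; lra. }
  destruct (choice (fun l I => In l X -> NoDup I /\ length I = m /\ forall i, In i I ->
    (i < dyadic n)%nat /\ exists x, in_cell P Q n i x /\ h x = c + INR l * s)) as [wit Hwit].
  { intros l; destruct (classic (In l X)) as [Hl | Hl]; [destruct (Hhit l Hl) as [I HI] | exists nil];
      eauto; intros; contradiction. }
  rewrite <- mult_INR.
  eapply Rle_trans; [apply le_INR, (double_count X wit (seq 0 (dyadic n)) W m HX) |].
  - intros l Hl; destruct (Hwit l Hl) as [? [? _]]; auto.
  - intros l i Hl Hi; destruct (Hwit l Hl) as [_ [_ Hi']]; destruct (Hi' i Hi) as [Hin Hx].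
    split; [apply in_seq; lia | apply HW; auto].
  - rewrite length_flat_map_seq.
    apply Rle_trans with (sum_upto (fun i => 2 / s * B i + 3) (dyadic n)).
    + apply sum_upto_le; intros i Hi; destruct (HW i Hi); unfold Rdiv in *; lra.
    + rewrite sum_upto_plus, sum_upto_scal, sum_upto_const.
      assert (2 / s * sum_upto B (dyadic n) <= 2 / s * V)
        by (apply Rmult_le_compat_l; [apply Rdiv_le_0_compat; lra | auto]).
      unfold Rdiv in *; lra.
Qed.

Lemma near_miss_window e s c n i : 0 < s -> 0 < e ->
  exists W : list nat, INR (length W) <= 4 * (e / s) + 6 /\
    forall l, (exists x, in_cell P Q n i x /\ Rabs (h x - (c + INR l * s)) < e) ->
      (forall x, in_cell P Q n i x -> h x < c + INR l * s) \/
      (forall x, in_cell P Q n i x -> c + INR l * s < h x) -> In l W.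
Proof.
  intros Hs He; set (close := fun l => exists x, in_cell P Q n i x /\ Rabs (h x - (c + INR l * s)) < e).
  destruct (index_window (fun l => close l /\ forall x, in_cell P Q n i x -> h x < c + INR l * s) (e / s))
    as [W1 [HW1 Hin1]]; [apply Rdiv_le_0_compat; lra | |].
  { intros l l' [[x [Hx Ex]] _] [_ Hl']; specialize (Hl' x Hx); apply (grid_index_diff l l' c s); auto.
    unfold Rabs in Ex; destruct Rcase_abs in Ex; lra. }
  destruct (index_window (fun l => close l /\ forall x, in_cell P Q n i x -> c + INR l * s < h x) (e / s))
    as [W2 [HW2 Hin2]]; [apply Rdiv_le_0_compat; lra | |].
  { intros l l' [_ Hl] [[x [Hx Ex]] _]; specialize (Hl x Hx); apply (grid_index_diff l l' c s); auto.
    unfold Rabs in Ex; destruct Rcase_abs in Ex; lra. }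
  exists (W1 ++ W2); split; [rewrite length_app, plus_INR; lra |].
  intros l Hl [Hside | Hside]; apply in_or_app; [left; apply Hin1 | right; apply Hin2]; split; auto.
Qed.

(* A grid value nearly hit at a level [k <= n] but not hit at level [n] misses
   the image of some level-[k] cell by less than [e k] ([meets_refine],
   [missed_cell], [cell_side]); each cell has few such values. *)
Lemma bad_grid_count (e : nat -> R) m n c s (X : list nat) : 0 < s -> (forall k, 0 < e k) -> NoDup X ->
  (forall l, In l X -> ~ hits n m (c + INR l * s) /\
     exists k, (k <= n)%nat /\ near (e k) k m (c + INR l * s)) ->
  INR (length X) <= sum_upto (fun k => INR (dyadic k) * (4 * (e k / s) + 6)) (S n).
Proof.
  intros Hs He HX Hbad.
  destruct (choice _ (fun ki => near_miss_window (e (fst ki)) s c (fst ki) (snd ki) Hs (He (fst ki))))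
    as [W HW].
  set (cover := flat_map (fun k => flat_map (fun i => W (k, i)) (seq 0 (dyadic k))) (seq 0 (S n))).
  apply Rle_trans with (INR (length cover)).
  - apply le_INR, NoDup_incl_length; auto; intros l Hl.
    destruct (Hbad l Hl) as [Hmiss [k [Hk Hnear]]].
    assert (Hmiss_k : ~ hits k m (c + INR l * s))
      by (intros Hh; apply Hmiss; exact (meets_refine k n m _ Hk Hh)).
    destruct (missed_cell k m _ _ Hnear Hmiss_k) as [i [Hi [Hx Hno]]].
    apply In_flat_map_seq; exists k; split; [lia |]; apply In_flat_map_seq; exists i; split; auto.
    apply (proj2 (HW (k, i))); auto; apply (cell_side k i); auto.
  - unfold cover; rewrite length_flat_map_seq; apply sum_upto_le; intros k _.
    rewrite length_flat_map_seq, <- sum_upto_const.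
    apply sum_upto_le; intros i _; exact (proj1 (HW (k, i))).
Qed.

Lemma variation_nonneg : 0 <= V.
Proof.
  destruct (h_var 0) as [B [HB HV]]; unfold dyadic in HV; simpl in HV.
  pose proof (HB 0%nat _ _ ltac:(unfold dyadic; simpl; lia)
    (node_in_cell P Q PltQ 0 0) (node_in_cell P Q PltQ 0 0)) as Hself.
  rewrite Rminus_diag, Rabs_R0 in Hself; lra.
Qed.

Lemma bad_grid_count_dyadic D m n c L (X : list nat) : 0 < D -> (0 < L)%nat -> NoDup X ->
  (forall l, In l X -> ~ hits n m (c + INR l * (D / INR L)) /\ exists k, (k <= n)%nat /\
     near (D / (16 * (INR (dyadic k) * INR (dyadic k)))) k m (c + INR l * (D / INR L))) ->
  INR (length X) <= INR L / 2 + 12 * INR (dyadic n).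
Proof.
  intros HD HL HX Hbad; apply lt_0_INR in HL.
  eapply Rle_trans;
    [apply (bad_grid_count (fun k => D / (16 * (INR (dyadic k) * INR (dyadic k)))) m n c (D / INR L) X); auto |].
  - apply Rdiv_lt_0_compat; auto.
  - intros k; pose proof (dyadic_INR_pos k); apply Rdiv_lt_0_compat; nra.
  - apply Rle_trans with (sum_upto (fun k => INR L / 4 * / INR (dyadic k) + 6 * INR (dyadic k)) (S n)).
    + apply sum_upto_le; intros k _; right; pose proof (dyadic_INR_pos k); field; lra.
    + rewrite sum_upto_plus, !sum_upto_scal; pose proof (sum_upto_dyadic n).
      assert (INR L / 4 * sum_upto (fun k => / INR (dyadic k)) (S n) <= INR L / 4 * 2)
        by (apply Rmult_le_compat_l; [lra | apply sum_upto_inv_dyadic]).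
      lra.
Qed.

Theorem level_set_finite_between a b : a < b ->
  exists y, a < y < b /\ exists l, forall x, P <= x <= Q -> h x = y -> In x l.
Proof.
  intros Hab; apply NNPP; intros Hnone.
  assert (Hinf : forall y, a < y < b -> forall m, exists n, hits n m y).
  { intros y Hy; apply hits_of_infinite_level; intros l; apply NNPP; intros Hfin; apply Hnone.
    exists y; split; auto; exists l; intros x Hx Ex; apply NNPP; intros Nx; apply Hfin; eauto. }
  set (c := (3 * a + b) / 4); set (D := (b - a) / 2); assert (HD : 0 < D) by (unfold D; lra).
  set (e := fun k => D / (16 * (INR (dyadic k) * INR (dyadic k)))).
  destruct (INR_unbounded (4 * (V / D) + 2)) as [m Hm].
  destruct (heine_borel_nat (fun k y => near (e k) k m y) c (c + D)) as [n Hn];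
    [lra | intros k y; apply near_open | |].
  { intros y Hy; destruct (Hinf y ltac:(unfold c, D in *; lra) m) as [k Hk]; exists k.
    refine (meets_weaken k m _ _ _ Hk); intros v ->; rewrite Rminus_diag, Rabs_R0.
    pose proof (dyadic_INR_pos k); apply Rdiv_lt_0_compat; nra. }
  set (K := dyadic n); set (L := (12 * m * K + 3 * K + 1)%nat); set (s := D / INR L).
  assert (HL : (0 < L)%nat) by lia.
  destruct (split_by (fun l => hits n m (c + INR l * s)) L)
    as [Good [Bad [HGood [HBad [HGp [HBp Hsplit]]]]]].
  pose proof (good_grid_count m n c s Good ltac:(apply Rdiv_lt_0_compat, lt_0_INR; auto) HGood HGp).
  pose proof (bad_grid_count_dyadic D m n c L Bad HD HL HBad) as Hbad.
  apply (grid_count_contradiction (INR m) (INR K) (INR L) (V / D) (INR (length Good)) (INR (length Bad)));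
    auto; try lra.
  - apply Rdiv_le_0_compat; [apply variation_nonneg | exact HD].
  - apply dyadic_INR_pos.
  - unfold L; rewrite !plus_INR, !mult_INR; simpl; lra.
  - apply Hbad; intros l Hl; destruct (HBp l Hl) as [HlL Hmiss]; split; auto; apply Hn.
    pose proof (grid_point_range l L D HlL HD); unfold c, D in *; lra.
  - replace (2 * (V / D) * INR L) with (2 * V / s) by (unfold s; apply lt_0_INR in HL; field; lra); auto.
Qed.

End LevelSets.

(** * Zeros of [f_[a] - b g] *)

Lemma ratio_diff_bound g0 F1 F2 G1 G2 dF dG : 0 < g0 -> g0 <= G1 -> g0 <= G2 -> 0 <= F2 <= 1 ->
  Rabs (F1 - F2) <= dF -> Rabs (G1 - G2) <= dG ->
  Rabs (F1 / G1 - F2 / G2) <= dF / g0 + dG / (g0 * g0).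
Proof.
  intros Hg H1 H2 HF HdF HdG.
  replace (F1 / G1 - F2 / G2) with ((F1 - F2) * / G1 + F2 * (G2 - G1) * / (G1 * G2)) by (field; lra).
  eapply Rle_trans; [apply Rabs_triang |]; rewrite !Rabs_mult.
  rewrite (Rabs_pos_eq (/ G1)) by (left; apply Rinv_0_lt_compat; lra).
  rewrite (Rabs_pos_eq (/ (G1 * G2))) by (left; apply Rinv_0_lt_compat; nra).
  rewrite (Rabs_pos_eq F2) by lra; rewrite Rabs_minus_sym in HdG.
  pose proof (Rabs_pos (F1 - F2)); pose proof (Rabs_pos (G2 - G1)).
  apply Rplus_le_compat; unfold Rdiv; apply Rmult_le_compat; try nra;
    try (left; apply Rinv_0_lt_compat; nra); apply Rinv_le_contravar; nra.
Qed.

Lemma decreasing_oscillation (phi : R -> R) P Q u v x x' :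
  (forall x y, P <= x -> x <= y -> y <= Q -> phi y <= phi x) ->
  P <= u -> v <= Q -> u <= x <= v -> u <= x' <= v -> Rabs (phi x - phi x') <= phi u - phi v.
Proof.
  intros Hdec HPu HvQ Hx Hx'.
  pose proof (Hdec u x HPu (proj1 Hx) ltac:(lra)); pose proof (Hdec x v ltac:(lra) (proj2 Hx) HvQ).
  pose proof (Hdec u x' HPu (proj1 Hx') ltac:(lra)); pose proof (Hdec x' v ltac:(lra) (proj2 Hx') HvQ).
  unfold Rabs; destruct Rcase_abs; lra.
Qed.

(* On a dyadic cell, [F / G] oscillates by at most the increments of [F] and [G]
   over the cell, and these increments telescope. *)
Lemma ratio_dyadic_variation (F G : R -> R) P Q g0 : P < Q -> 0 < g0 ->
  (forall x y, P <= x -> x <= y -> y <= Q -> F y <= F x) ->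
  (forall x y, P <= x -> x <= y -> y <= Q -> G y <= G x) ->
  (forall x, P <= x <= Q -> 0 <= F x <= 1) -> (forall x, P <= x <= Q -> g0 <= G x) ->
  forall n, exists B : nat -> R,
    (forall i x x', (i < dyadic n)%nat -> in_cell P Q n i x -> in_cell P Q n i x' ->
       Rabs (F x / G x - F x' / G x') <= B i) /\
    sum_upto B (dyadic n) <= (F P - F Q) / g0 + (G P - G Q) / (g0 * g0).
Proof.
  intros HPQ Hg HF HG HF01 HGg n.
  set (u := fun i => F (node P Q n i) / g0 + G (node P Q n i) / (g0 * g0)).
  exists (fun i => u i - u (S i)); split.
  - intros i x x' Hi [Hx1 Hx2] [Hx1' Hx2'].
    pose proof (node_range P Q HPQ n i ltac:(lia)); pose proof (node_range P Q HPQ n (S i) Hi).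
    replace (u i - u (S i)) with ((F (node P Q n i) - F (node P Q n (S i))) / g0 +
      (G (node P Q n i) - G (node P Q n (S i))) / (g0 * g0)) by (unfold u; field; lra).
    apply ratio_diff_bound; auto; try (apply HGg; lra); try (apply HF01; lra);
      apply decreasing_oscillation with P Q; auto; lra.
  - rewrite sum_upto_telescope; unfold u; rewrite node_last; unfold node; simpl.
    rewrite Rmult_0_l, Rplus_0_r; right; field; lra.
Qed.

Lemma in_D_cont_on f : in_D f -> cont_on f 0 1.
Proof. intros H; exact (proj1 H). Qed.

Lemma in_D_dec f x y : in_D f -> 0 <= x -> x <= y -> y <= 1 -> f y <= f x.
Proof. intros (_ & H & _) H1 H2 H3; destruct (Req_dec x y) as [-> | Hne]; [lra | left; apply H; lra]. Qed.

Lemma in_D_range f x : in_D f -> 0 <= x <= 1 -> 0 <= f x <= 1.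
Proof. intros (_ & _ & H & _); auto. Qed.

Lemma in_D_pos f x : in_D f -> 0 <= x < 1 -> 0 < f x.
Proof. intros (_ & H & _ & _ & H1) Hx; rewrite <- H1; apply H; lra. Qed.

Lemma scaled_diff_cont_on f g a b Q : in_D f -> in_D g -> 0 < a -> 0 <= Q <= 1 -> a * Q <= 1 ->
  cont_on (scaled_diff f g a b) 0 Q.
Proof.
  intros Hf Hg Ha HQ HaQ; apply cont_on_minus; [lra | |].
  - apply (cont_on_rescale f a Q); auto; [lra | apply in_D_cont_on; auto].
  - apply cont_on_scal; [lra | apply (cont_on_sub _ 0 1); [apply in_D_cont_on | |]; auto; lra].
Qed.

(* The zeros of [f_[a] - b g] are the [b]-level set of the ratio [f_[a] / g], a
   function of bounded variation away from the zero of [g] at [1]. *)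
Lemma scaled_diff_finite_zeros f g a Q alpha beta : in_D f -> in_D g -> 0 < a -> 0 < Q < 1 ->
  a * Q <= 1 -> alpha < beta ->
  exists b, alpha < b < beta /\ exists l, forall x, 0 <= x <= Q -> scaled_diff f g a b x = 0 -> In x l.
Proof.
  intros Hf Hg Ha HQ HaQ Hab.
  assert (HgQ : forall x, 0 <= x <= Q -> g Q <= g x) by (intros; apply in_D_dec; auto; lra).
  assert (Hg0 : 0 < g Q) by (apply in_D_pos; auto; lra).
  destruct (level_set_finite_between (fun x => f (a * x) / g x) 0 Q
    ((f (a * 0) - f (a * Q)) / g Q + (g 0 - g Q) / (g Q * g Q)) ltac:(lra)) with (a := alpha) (b := beta)
    as [b [Hb [l Hl]]]; auto.
  - apply cont_on_div; [lra | | |].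
    + apply (cont_on_rescale f a Q); auto; [lra | apply in_D_cont_on; auto].
    + apply (cont_on_sub _ 0 1); [apply in_D_cont_on | |]; auto; lra.
    + intros x Hx; specialize (HgQ x Hx); lra.
  - apply (ratio_dyadic_variation (fun x => f (a * x)) g 0 Q (g Q)); auto; [lra | | |].
    + intros; apply in_D_dec; auto; nra.
    + intros; apply in_D_dec; auto; lra.
    + intros; apply in_D_range; auto; nra.
  - exists b; split; auto; exists l; intros x Hx Ex; apply Hl; auto.
    unfold scaled_diff in Ex; specialize (HgQ x Hx).
    replace (f (a * x)) with (b * g x) by lra; field; lra.
Qed.

Lemma switches_ge_down_closed Delta c0 d0 : down_closed (switches_ge Delta c0 d0).
Proof.
  intros k [[| cd l] [Hlen [Hnd Hall]]]; [discriminate |].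
  exists l; simpl in Hlen; split; [lia |]; split; [inversion Hnd | inversion Hall]; auto.
Qed.

Lemma switches_ge_0 Delta c0 d0 : switches_ge Delta c0 d0 0.
Proof. exists nil; split; auto; split; constructor. Qed.

Lemma Fin_le_chi Delta c0 d0 k : enat_le (Fin k) (chi Delta c0 d0) <-> switches_ge Delta c0 d0 k.
Proof. apply Fin_le_enat_of_ge; [apply switches_ge_down_closed | apply switches_ge_0]. Qed.

Definition crosses_ge (f g : R -> R) (k : nat) : Prop :=
  exists a b, 0 < a /\ 0 < b /\ switches_ge (scaled_diff f g a b) 0 (Rmin 1 (/ a)) k.

Lemma Fin_le_crossing_number f g k : enat_le (Fin k) (crossing_number f g) <-> crosses_ge f g k.
Proof.
  unfold crossing_number; rewrite Fin_le_enat_of_ge.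
  - split; intros [a [b [Ha [Hb Hsw]]]]; exists a, b; repeat split; auto; apply Fin_le_chi; auto.
  - intros j [a [b [Ha [Hb Hsw]]]]; exists a, b; repeat split; auto.
    apply Fin_le_chi; apply Fin_le_chi in Hsw; apply switches_ge_down_closed; auto.
  - exists 1, 1; repeat split; try lra; apply Fin_le_chi, switches_ge_0.
Qed.

Lemma sign_switch_at Delta d0 z d : 0 < z -> z < d0 -> Delta z = 0 -> 0 < d -> d <= z -> d <= d0 - z ->
  (forall x, 0 < x <= d -> Delta (z - x) * Delta (z + x) < 0) -> sign_switch Delta 0 d0 z z.
Proof.
  intros Hz Hzd Ez Hd Hdz Hdd Hs; repeat split; try lra.
  - intros x Hx; replace x with z by lra; exact Ez.
  - exists d; repeat split; auto; apply Rmin_glb; lra.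
Qed.

Lemma sign_switch_left_end Delta c0 d0 c d u v : sign_switch Delta c0 d0 c d ->
  u < c -> c <= v -> (forall x, u <= x <= v -> Delta x = 0) -> False.
Proof.
  intros (_ & _ & _ & _ & r & Hr & _ & S) Huc Hcv Z.
  set (t := Rmin r (c - u)); assert (Ht : 0 < t) by (apply Rmin_pos; lra).
  specialize (S t (conj Ht (Rmin_l _ _))).
  rewrite (Z (c - t)) in S; [lra |]; pose proof (Rmin_r r (c - u)) as Htc; fold t in Htc; lra.
Qed.

Lemma sign_switch_right_end Delta c0 d0 c d u v : sign_switch Delta c0 d0 c d ->
  u <= d -> d < v -> (forall x, u <= x <= v -> Delta x = 0) -> False.
Proof.
  intros (_ & _ & _ & _ & r & Hr & _ & S) Hud Hdv Z.
  set (t := Rmin r (v - d)); assert (Ht : 0 < t) by (apply Rmin_pos; lra).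
  specialize (S t (conj Ht (Rmin_l _ _))).
  rewrite (Z (d + t)) in S; [lra |]; pose proof (Rmin_r r (v - d)) as Htd; fold t in Htd; lra.
Qed.

Lemma sign_switch_disjoint Delta c0 d0 c d c' d' :
  sign_switch Delta c0 d0 c d -> sign_switch Delta c0 d0 c' d' -> (c, d) <> (c', d') -> d < c' \/ d' < c.
Proof.
  intros Hsw Hsw' Hne; pose proof Hsw as (_ & Hcd & _ & Z & _); pose proof Hsw' as (_ & Hcd' & _ & Z' & _).
  destruct (Rlt_dec d c') as [| Hdc']; [left; auto |]; destruct (Rlt_dec d' c) as [| Hd'c]; [right; auto |].
  exfalso; destruct (Rtotal_order c c') as [Hlt | [<- | Hgt]].
  - apply (sign_switch_left_end Delta c0 d0 c' d' c d); auto; lra.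
  - destruct (Rtotal_order d d') as [Hlt | [<- | Hgt]]; [| contradiction |].
    + apply (sign_switch_right_end Delta c0 d0 c d c d'); auto; lra.
    + apply (sign_switch_right_end Delta c0 d0 c d' c d); auto; lra.
  - apply (sign_switch_left_end Delta c0 d0 c d c' d'); auto; lra.
Qed.

Lemma switch_points_of_sign_changes Delta Q d0 (zl : list R) (ivs : list (R * R)) :
  Q <= d0 -> cont_on Delta 0 Q -> (forall x, 0 <= x <= Q -> Delta x = 0 -> In x zl) -> NoDup ivs ->
  (forall iv, In iv ivs -> 0 <= fst iv < snd iv /\ snd iv <= Q /\ Delta (fst iv) * Delta (snd iv) < 0) ->
  (forall iv iv', In iv ivs -> In iv' ivs -> iv <> iv' -> snd iv <= fst iv' \/ snd iv' <= fst iv) ->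
  exists zs, length zs = length ivs /\ NoDup zs /\ forall z, In z zs ->
    sign_switch Delta 0 d0 z z /\ exists iv, In iv ivs /\ fst iv < z < snd iv.
Proof.
  intros HQ Hc Hzl; induction ivs as [| iv ivs IH]; intros Hnd Hivs Hdisj;
    [exists nil; split; [reflexivity | split; [constructor | intros z []]] |].
  apply NoDup_cons_iff in Hnd as [Hiv Hnd].
  destruct (Hivs iv (or_introl eq_refl)) as [[Hp Hpq] [Hq Hs]].
  destruct (point_sign_switch Delta (fst iv) (snd iv) zl Hpq (cont_on_sub Delta 0 Q _ _ Hc Hp Hq) Hs)
    as [z [d [Hz [Ez [Hd [Hdp [Hdq Hsw]]]]]]]; [intros x Hx; apply Hzl; lra |].
  destruct IH as [zs [Hlen [Hndz Hzs]]]; auto; [intros; apply Hivs; right; auto |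
    intros; apply Hdisj; auto; right; auto |].
  exists (z :: zs); split; [simpl; auto |]; split.
  - constructor; auto; intros Hin; destruct (Hzs z Hin) as [_ [iv' [Hiv' Hz']]].
    assert (Hne : iv <> iv') by (intros ->; contradiction).
    destruct (Hdisj iv iv' (or_introl eq_refl) (or_intror Hiv') Hne); lra.
  - intros z' [<- | Hin].
    + split; [apply (sign_switch_at Delta d0 z d); auto; lra | exists iv; split; [left |]; auto].
    + destruct (Hzs z' Hin) as [Hs' [iv' [Hiv' Hz']]]; split; auto; exists iv'; split; [right |]; auto.
Qed.

Lemma switches_of_sign_changes Delta Q d0 (zl : list R) (ivs : list (R * R)) :
  Q <= d0 -> cont_on Delta 0 Q -> (forall x, 0 <= x <= Q -> Delta x = 0 -> In x zl) -> NoDup ivs ->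
  (forall iv, In iv ivs -> 0 <= fst iv < snd iv /\ snd iv <= Q /\ Delta (fst iv) * Delta (snd iv) < 0) ->
  (forall iv iv', In iv ivs -> In iv' ivs -> iv <> iv' -> snd iv <= fst iv' \/ snd iv' <= fst iv) ->
  switches_ge Delta 0 d0 (length ivs).
Proof.
  intros HQ Hc Hzl Hnd Hivs Hdisj.
  destruct (switch_points_of_sign_changes Delta Q d0 zl ivs HQ Hc Hzl Hnd Hivs Hdisj)
    as [zs [Hlen [Hndz Hzs]]].
  exists (map (fun z => (z, z)) zs); split; [rewrite length_map; auto | split].
  - apply NoDup_map_NoDup_ForallPairs; auto; intros z z' _ _ E; congruence.
  - apply Forall_forall; intros cd Hcd; apply in_map_iff in Hcd as [z [<- Hz]]; apply Hzs, Hz.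
Qed.

(** * Lower semicontinuity of the crossing number *)

Lemma switch_margins Delta d0 (sw : list (R * R)) :
  (forall cd, In cd sw -> sign_switch Delta 0 d0 (fst cd) (snd cd)) ->
  exists rho, 0 < rho /\ forall cd, In cd sw ->
    0 < fst cd - rho /\ snd cd + rho < d0 /\ Delta (fst cd - rho) * Delta (snd cd + rho) < 0 /\
    forall cd', In cd' sw -> cd' <> cd -> snd cd + rho < fst cd' - rho \/ snd cd' + rho < fst cd - rho.
Proof.
  intros Hsw; destruct (uniform_radius sw (fun cd r => 0 < fst cd - r /\ snd cd + r < d0 /\
    Delta (fst cd - r) * Delta (snd cd + r) < 0 /\ forall cd', In cd' sw -> cd' <> cd ->
      snd cd + r < fst cd' - r \/ snd cd' + r < fst cd - r)) as [rho [Hrho Hunif]];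
    [| exists rho; split; auto; intros cd Hcd; apply Hunif; auto; lra].
  intros [c d] Hcd; pose proof (Hsw _ Hcd) as Hs; simpl in Hs.
  pose proof Hs as (Hc0 & Hcd_le & Hdd0 & _ & r & Hr & Hrm & S).
  pose proof (Rmin_l (c - 0) (d0 - d)); pose proof (Rmin_r (c - 0) (d0 - d)).
  destruct (uniform_radius sw (fun cd' r => cd' <> (c, d) -> d + r < fst cd' - r \/ snd cd' + r < c - r))
    as [r2 [Hr2 Hsep]].
  { intros [c' d'] Hcd'; destruct (classic ((c', d') = (c, d))) as [E | E];
      [exists 1; split; [lra | intros; contradiction] |].
    destruct (sign_switch_disjoint Delta 0 d0 c d c' d' Hs (Hsw _ Hcd')) as [G | G]; [congruence | |].
    - exists ((c' - d) / 3); split; [lra | intros; simpl; left; lra].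
    - exists ((c - d') / 3); split; [lra | intros; simpl; right; lra]. }
  exists (Rmin (r / 2) r2); split; [apply Rmin_pos; lra |]; intros r' Hr'.
  pose proof (Rmin_l (r / 2) r2); pose proof (Rmin_r (r / 2) r2); simpl.
  split; [lra | split; [lra | split; [apply S; lra |]]].
  intros cd' Hcd' Hne; apply (Hsep cd' Hcd' r'); auto; lra.
Qed.

Lemma sign_change_robust u v : u * v < 0 ->
  exists mu, 0 < mu /\ forall mu', 0 < mu' <= mu -> forall u' v',
    Rabs (u' - u) < mu' -> Rabs (v' - v) < mu' -> u' * v' < 0.
Proof.
  intros Huv; assert (u <> 0 /\ v <> 0) as [Hu Hv] by (split; intros ->; lra).
  exists (Rmin (Rabs u) (Rabs v)); split; [apply Rmin_pos; apply Rabs_pos_lt; auto |].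
  intros mu' Hmu' u' v' H1 H2; pose proof (Rmin_l (Rabs u) (Rabs v)); pose proof (Rmin_r (Rabs u) (Rabs v)).
  apply (opposite_sign_transfer u v); auto; unfold Rabs in *; repeat destruct Rcase_abs; nra.
Qed.

Lemma scaled_diff_close f g f' g' a b b' mu t : 0 < b -> 0 <= g' t <= 1 ->
  Rabs (f' (a * t) - f (a * t)) < mu / 3 -> b * Rabs (g' t - g t) < mu / 3 -> Rabs (b' - b) <= mu / 3 ->
  Rabs (scaled_diff f' g' a b' t - scaled_diff f g a b t) < mu.
Proof.
  intros Hb Hg' Hf Hg Hbb; unfold scaled_diff.
  replace (f' (a * t) - b' * g' t - (f (a * t) - b * g t)) with
    ((f' (a * t) - f (a * t)) - b * (g' t - g t) - (b' - b) * g' t) by ring.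
  assert (Rabs ((b' - b) * g' t) <= mu / 3)
    by (rewrite Rabs_mult, (Rabs_pos_eq (g' t)) by lra; pose proof (Rabs_pos (b' - b)); nra).
  assert (Rabs (b * (g' t - g t)) < mu / 3) by (rewrite Rabs_mult, Rabs_pos_eq by lra; lra).
  unfold Rminus at 1 2; eapply Rle_lt_trans; [apply Rabs_triang |]; rewrite Rabs_Ropp.
  eapply Rle_lt_trans; [apply Rplus_le_compat_r, Rabs_triang |]; rewrite Rabs_Ropp; lra.
Qed.

Lemma upper_bound_below (ys : list R) d0 : 0 < d0 -> (forall y, In y ys -> y < d0) ->
  exists Q0, d0 / 2 <= Q0 < d0 /\ forall y, In y ys -> y <= Q0.
Proof.
  intros Hd; induction ys as [| y ys IH]; intros Hlt; [exists (d0 / 2); split; [lra | intros y []] |].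
  destruct IH as [Q0 [HQ HQ']]; [intros; apply Hlt; right; auto |].
  exists (Rmax Q0 y); split; [split; [eapply Rle_trans; [| apply Rmax_l]; lra |] |].
  - apply Rmax_lub_lt; [lra | apply Hlt; left; auto].
  - intros y' [<- | Hy']; [apply Rmax_r | eapply Rle_trans; [apply HQ'; auto | apply Rmax_l]].
Qed.

Lemma close_perturbation_finite_zeros f g fs gs a b mu d0 Q0 :
  (forall n, in_D (fs n)) -> (forall n, in_D (gs n)) -> unif_conv fs f -> unif_conv gs g ->
  0 < a -> 0 < b -> 0 < mu -> 0 < Q0 < 1 -> Q0 <= d0 -> d0 <= 1 -> a * d0 <= 1 ->
  exists n b', 0 < b' /\
    (exists zl, forall x, 0 <= x <= Q0 -> scaled_diff (fs n) (gs n) a b' x = 0 -> In x zl) /\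
    forall t, 0 <= t <= d0 -> Rabs (scaled_diff (fs n) (gs n) a b' t - scaled_diff f g a b t) < mu.
Proof.
  intros Hfs Hgs Uf Ug Ha Hb Hmu HQ0 HQd Hd1 Had.
  destruct (Uf (mu / 3)) as [N1 HN1]; [lra |].
  destruct (Ug (mu / (3 * b))) as [N2 HN2]; [apply Rdiv_lt_0_compat; lra |].
  pose proof (Rmin_l (b / 2) (mu / 3)); pose proof (Rmin_r (b / 2) (mu / 3)).
  set (n := Nat.max N1 N2); set (eta := Rmin (b / 2) (mu / 3)) in *.
  assert (Heta : 0 < eta) by (apply Rmin_pos; lra).
  destruct (scaled_diff_finite_zeros (fs n) (gs n) a Q0 (b - eta) (b + eta)) as [b' [Hb' Hzl]];
    auto; try lra; [nra |].
  exists n, b'; split; [lra | split; auto]; intros t Ht; apply scaled_diff_close; auto.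
  - apply in_D_range; auto; lra.
  - apply HN1; [lia | nra].
  - specialize (HN2 n ltac:(lia) t ltac:(lra)); apply (Rmult_lt_compat_l b) in HN2; auto.
    replace (b * (mu / (3 * b))) with (mu / 3) in HN2 by (field; lra); exact HN2.
  - unfold Rabs; destruct Rcase_abs; lra.
Qed.

(* Perturbing [b] slightly makes the zeros of the approximating difference finite
   while keeping each sign change of [f_[a] - b g] around its sign switches. *)
Lemma crosses_ge_approx f g fs gs k :
  (forall n, in_D (fs n)) -> (forall n, in_D (gs n)) -> unif_conv fs f -> unif_conv gs g ->
  crosses_ge f g k -> exists n, crosses_ge (fs n) (gs n) k.
Proof.
  intros Hfs Hgs Uf Ug [a [b [Ha [Hb [sw [Hlen [Hnd Hall]]]]]]]; rewrite Forall_forall in Hall.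
  set (d0 := Rmin 1 (/ a)); set (Delta := scaled_diff f g a b).
  assert (Hd0 : 0 < d0) by (apply Rmin_pos; [lra | apply Rinv_0_lt_compat; auto]).
  assert (Hd01 : d0 <= 1) by apply Rmin_l.
  assert (Had0 : a * d0 <= 1)
    by (rewrite <- (Rinv_r a) by lra; apply Rmult_le_compat_l; [lra | apply Rmin_r]).
  destruct (switch_margins Delta d0 sw Hall) as [rho [Hrho Hm]].
  set (ivs := map (fun cd => (fst cd - rho, snd cd + rho)) sw).
  assert (Hivs : forall iv, In iv ivs ->
    0 < fst iv < snd iv /\ snd iv < d0 /\ Delta (fst iv) * Delta (snd iv) < 0).
  { intros iv Hiv; apply in_map_iff in Hiv as [cd [<- Hcd]]; simpl.
    destruct (Hm cd Hcd) as (Hc & Hd & Hsg & _); destruct (Hall cd Hcd) as (_ & Hcd' & _).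
    repeat split; lra. }
  destruct (uniform_radius ivs (fun iv mu => forall u' v', Rabs (u' - Delta (fst iv)) < mu ->
    Rabs (v' - Delta (snd iv)) < mu -> u' * v' < 0)) as [mu [Hmu Hrob]].
  { intros iv Hiv; apply sign_change_robust, Hivs, Hiv. }
  destruct (upper_bound_below (map snd ivs) d0 Hd0) as [Q0 [HQ0 HQ0']].
  { intros y Hy; apply in_map_iff in Hy as [iv [<- Hiv]]; apply Hivs, Hiv. }
  destruct (close_perturbation_finite_zeros f g fs gs a b mu d0 Q0) as [n [b' [Hb' [[zl Hzl] Hclose]]]];
    auto; try lra.
  exists n, a, b'; split; auto; split; auto.
  rewrite <- Hlen, <- (length_map (fun cd => (fst cd - rho, snd cd + rho)) sw); fold ivs.
  apply (switches_of_sign_changes _ Q0 d0 zl ivs); auto; try lra.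
  - apply scaled_diff_cont_on; auto; [lra | nra].
  - apply NoDup_map_NoDup_ForallPairs; auto; intros [c d] [c' d'] _ _ E; simpl in E.
    injection E; intros; f_equal; lra.
  - intros iv Hiv; destruct (Hivs iv Hiv) as [Hpq [Hqd Hsg]].
    pose proof (HQ0' (snd iv) (in_map snd ivs iv Hiv)).
    split; [lra | split; [auto |]]; apply (Hrob iv Hiv mu); try lra; apply Hclose; lra.
  - intros iv iv' Hiv Hiv' Hne.
    apply in_map_iff in Hiv as [cd [<- Hcd]]; apply in_map_iff in Hiv' as [cd' [<- Hcd']].
    assert (Hne' : cd' <> cd) by (intros ->; contradiction).
    destruct (Hm cd Hcd) as (_ & _ & _ & Hsep); destruct (Hsep cd' Hcd' Hne'); simpl; lra.
Qed.

Lemma crossing_number_le_sup f g fs gs :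
  (forall n, in_D (fs n)) -> (forall n, in_D (gs n)) -> unif_conv fs f -> unif_conv gs g ->
  enat_le (crossing_number f g) (enat_sup_seq (fun n => crossing_number (fs n) (gs n))).
Proof.
  intros Hfs Hgs Uf Ug; apply enat_le_of_Fin_le; intros k Hk.
  apply Fin_le_enat_sup_seq; apply Fin_le_crossing_number in Hk.
  destruct (crosses_ge_approx f g fs gs k Hfs Hgs Uf Ug Hk) as [n Hn].
  exists n; apply Fin_le_crossing_number, Hn.
Qed.

(** * Domination *)

Lemma stretch_above f g x0 : in_D f -> 0 < x0 < 1 -> g x0 < f x0 ->
  exists a, 1 < a /\ a * x0 < 1 /\ g x0 < f (a * x0).
Proof.
  intros Hf Hx0 Hlt.
  destruct (in_D_cont_on f Hf x0 ltac:(lra) (f x0 - g x0) ltac:(lra)) as [d [Hd Hc]].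
  set (t := Rmin (d / 2) ((1 - x0) / 2)).
  assert (Ht : 0 < t) by (apply Rmin_pos; lra).
  pose proof (Rmin_l (d / 2) ((1 - x0) / 2)) as Htd; pose proof (Rmin_r (d / 2) ((1 - x0) / 2)) as Htx.
  fold t in Htd, Htx; exists (1 + t); split; [lra | split; [nra |]].
  assert (Hclose : Rabs (f ((1 + t) * x0) - f x0) < f x0 - g x0).
  { apply Hc; [nra |]; replace ((1 + t) * x0 - x0) with (t * x0) by ring.
    rewrite Rabs_pos_eq by nra; nra. }
  unfold Rabs in Hclose; destruct Rcase_abs in Hclose; lra.
Qed.

Lemma crosses_ge_two f g x0 : in_D f -> in_D g -> 0 < x0 < 1 -> g x0 < f x0 -> crosses_ge f g 2.
Proof.
  intros Hf Hg Hx0 Hlt; destruct (stretch_above f g x0 Hf Hx0 Hlt) as [a [Ha [Hax0 Hfa]]].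
  pose proof Hf as (_ & _ & _ & Hf0 & Hf1); pose proof Hg as (_ & _ & _ & Hg0 & _).
  assert (Hia : 0 < / a < 1)
    by (split; [apply Rinv_0_lt_compat | rewrite <- Rinv_1; apply Rinv_lt_contravar]; lra).
  assert (Hx0a : x0 < / a) by (apply (Rmult_lt_reg_l a); [lra | rewrite Rinv_r; lra]).
  assert (Haa : a * / a = 1) by (apply Rinv_r; lra).
  assert (Hgx0 : 0 < g x0) by (apply in_D_pos; auto; lra).
  assert (Hga : 0 < g (/ a)) by (apply in_D_pos; auto; lra).
  destruct (scaled_diff_finite_zeros f g a (/ a) 1 (f (a * x0) / g x0)) as [b [Hb [zl Hzl]]]; auto; try lra.
  { apply (Rmult_lt_reg_r (g x0)); auto; unfold Rdiv; rewrite Rmult_assoc, Rinv_l; lra. }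
  set (Delta := scaled_diff f g a b).
  assert (HD0 : Delta 0 < 0).
  { unfold Delta, scaled_diff; rewrite Rmult_0_r, Hf0, Hg0; lra. }
  assert (HDx0 : 0 < Delta x0).
  { unfold Delta, scaled_diff; assert (Hbx := Rmult_lt_compat_r (g x0) _ _ Hgx0 (proj2 Hb)).
    unfold Rdiv in Hbx; rewrite Rmult_assoc, Rinv_l in Hbx; lra. }
  assert (HDa : Delta (/ a) < 0).
  { unfold Delta, scaled_diff; rewrite Haa, Hf1.
    assert (0 < b * g (/ a)) by (apply Rmult_lt_0_compat; lra); lra. }
  exists a, b; split; [lra | split; [lra |]].
  rewrite (Rmin_right 1 (/ a)) by lra.
  change 2%nat with (length ((0, x0) :: (x0, / a) :: nil)).
  apply (switches_of_sign_changes _ (/ a) (/ a) zl); auto; try lra.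
  - apply scaled_diff_cont_on; auto; lra.
  - repeat constructor; simpl; [intros [E | []]; injection E; lra | tauto].
  - intros iv [<- | [<- | []]]; simpl; repeat split; try lra; fold Delta; nra.
  - intros iv iv' [<- | [<- | []]] [<- | [<- | []]] Hne; simpl; try lra; contradiction.
Qed.

Lemma le_of_unif_conv fs gs f g : unif_conv fs f -> unif_conv gs g ->
  (forall n x, 0 <= x <= 1 -> gs n x <= fs n x) -> forall x, 0 <= x <= 1 -> g x <= f x.
Proof.
  intros Uf Ug Hle x Hx; apply Rnot_lt_le; intros Hlt.
  destruct (Uf ((g x - f x) / 2) ltac:(lra)) as [N1 H1].
  destruct (Ug ((g x - f x) / 2) ltac:(lra)) as [N2 H2].
  specialize (H1 (Nat.max N1 N2) ltac:(lia) x Hx); specialize (H2 (Nat.max N1 N2) ltac:(lia) x Hx).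
  specialize (Hle (Nat.max N1 N2) x Hx).
  unfold Rabs in *; destruct Rcase_abs in H1; destruct Rcase_abs in H2; lra.
Qed.

Lemma interior_gap f g : in_D f -> in_D g -> (forall x, 0 <= x <= 1 -> g x <= f x) ->
  ~ (forall x, 0 <= x <= 1 -> f x = g x) -> exists x0, 0 < x0 < 1 /\ g x0 < f x0.
Proof.
  intros (_ & _ & _ & F0 & F1) (_ & _ & _ & G0 & G1) Hle Hneq.
  apply not_all_ex_not in Hneq as [x0 Hx0]; apply imply_to_and in Hx0 as [Hx0 Hne].
  exists x0; pose proof (Hle x0 Hx0); split; [| lra].
  split; apply Rnot_le_lt; intros ?; [replace x0 with 0 in Hne | replace x0 with 1 in Hne]; lra.
Qed.

Theorem proposition3p5 (f g : R -> R) (fs gs : nat -> R -> R) :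
  in_D f -> in_D g -> (forall n, in_D (fs n)) -> (forall n, in_D (gs n)) ->
  unif_conv fs f -> unif_conv gs g ->
  enat_le (crossing_number f g)
          (enat_sup_seq (fun n => crossing_number (fs n) (gs n))) /\
  ((forall n, dominated (gs n) (fs n)) ->
     (forall x, 0 <= x <= 1 -> f x = g x) \/ dominated g f).
Proof.
  intros Hf Hg Hfs Hgs Uf Ug.
  pose proof (crossing_number_le_sup f g fs gs Hfs Hgs Uf Ug) as Hsup.
  split; [exact Hsup | intros Hdom].
  assert (Hle : forall x, 0 <= x <= 1 -> g x <= f x)
    by (apply (le_of_unif_conv fs gs); auto; intros n; apply Hdom).
  destruct (classic (forall x, 0 <= x <= 1 -> f x = g x)) as [Heq | Hneq]; [left; exact Heq | right].
  split; [| exact Hle]; apply enat_le_antisym.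
  - rewrite (enat_sup_seq_const _ (Fin 2)) in Hsup; [exact Hsup |]; intros n; apply Hdom.
  - destruct (interior_gap f g Hf Hg Hle Hneq) as [x0 [Hx0 Hlt]].
    apply Fin_le_crossing_number, (crosses_ge_two f g x0); auto.
Qed.
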